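(* For any $n\in\mathbb{N}$, the monoid $\mathrm{rps}_n$ does not satisfy any non-trivial identity of length less than or equal to $n$.
   Context: Let $\mathcal{A}_n=\{1<2<\cdots<n\}$. An rPS tableau is a finite (possibly empty) sequence of nonempty bottom-justified columns of boxes filled with positive integers, such that the entries of each column are weakly decreasing from top to bottom and the bottom entries of the columns form a strictly increasing sequence from left to right. Right insertion of a symbol $a$ into an rPS tableau $B$: if $a$ is strictly greater than every entry of the bottom row, append a new column consisting of $a$ at the right end; otherwise, let $z$ be the leftmost bottom-row entry with $z\geq a$ and put $a$ in a new box at the bottom of the column of $z$ (the previous entries of that column move up one box). For $w=w_1\cdots w_k$, $\mathfrak{R}_r(w)$ is obtained by starting with the empty tableau and right-inserting $w_1,\dots,w_k$ in order. The monoid $\mathrm{rps}_n$ is the quotient of $\mathcal{A}_n^*$ by the congruence $u\equiv v\iff\mathfrak{R}_r(u)=\mathfrak{R}_r(v)$. An identity is a formal equality $u=v$ of words over a countable alphabet of variables; it is non-trivial if $u\neq v$ as words; a monoid $M$ satisfies it if equality holds under every substitution of elements of $M$ for the variables (i.e. for every morphism from the free monoid on the variables to $M$). The length of an identity $u=v$ is $|u|$, the length of its left-hand side. *)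

From mathcomp Require Import all_boot.
Set Implicit Arguments. Unset Strict Implicit. Unset Printing Implicit Defensive.

(* An rPS tableau is a sequence of columns (left to right); each column is a
   nonempty list of positive integers listed from BOTTOM to TOP, so the head
   of a column is its bottom-row entry. *)
Definition rps_tableau := seq (seq nat).

Fixpoint rps_rinsert (B : rps_tableau) (a : nat) : rps_tableau :=
  match B with
  | [::] => [:: [:: a]]
  | c :: B' => if a <= head 0 c then (a :: c) :: B' else c :: rps_rinsert B' a
  end.

Definition rps_Rr (w : seq nat) : rps_tableau := foldl rps_rinsert [::] w.

Definition word_over (n : nat) (w : seq nat) : bool :=
  all (fun a => (0 < a) && (a <= n)) w.

(* Identities are pairs of words over the countable variable alphabet nat.
   A morphism from the free monoid on the variables into rps_n = A_n^* / ==
   is determined by choosing, for each variable x, an element of rps_n,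
   i.e. (a representative) word sigma x over A_n; the image of a word u is
   the class of the concatenation of the sigma x along u. *)
Definition subst_word (sigma : nat -> seq nat) (u : seq nat) : seq nat :=
  flatten (map sigma u).

Definition rps_satisfies (n : nat) (u v : seq nat) : Prop :=
  forall sigma : nat -> seq nat,
    (forall x, word_over n (sigma x)) ->
    rps_Rr (subst_word sigma u) = rps_Rr (subst_word sigma v).

From mathcomp Require Import all_boot.
Set Implicit Arguments. Unset Strict Implicit. Unset Printing Implicit Defensive.

(* The tableau R_r(w) has exactly |w| boxes, so sending every variable to the
   letter 1 separates words of different lengths.  Words of equal length are
   separated by substitutions sending every variable to a column, i.e. to a
   weakly decreasing word.  If the first letters x <> y differ, x |-> 2 and
   y |-> 1 (or x |-> 1 alone when the words are single letters) work, since
   the first letter of a word stays on top of the first column.  If u = x u'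
   and v = x v', take a column substitution sigma over A_(n-1) separating u'
   and v', add 1 to all its letters and append a 1 to the image of x: that
   image builds a single column with bottom entry 1, which absorbs every later
   1 and is skipped by every larger letter, so the remaining columns form the
   shifted tableau of sigma(u'). *)

Lemma size_foldl_rps_rinsert B w :
  sumn (shape (foldl rps_rinsert B w)) = sumn (shape B) + size w.
Proof.
elim: w B => [|a w IH] B /=; first by rewrite addn0.
rewrite IH; suff -> : sumn (shape (rps_rinsert B a)) = (sumn (shape B)).+1 by rewrite addSnnS.
by elim: B => //= c B IHB; case: ifP => _ //=; rewrite IHB addnS.
Qed.

Lemma size_rps_Rr w : sumn (shape (rps_Rr w)) = size w.
Proof. exact: size_foldl_rps_rinsert. Qed.

Lemma foldl_rps_rinsert_first_column c B w :
  exists d, head [::] (foldl rps_rinsert (c :: B) w) = d ++ c.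
Proof.
elim: w c B => [|a w IH] c B /=; first by exists [::].
case: ifP => _; last exact: IH.
by have [d ->] := IH (a :: c) B; exists (d ++ [:: a]); rewrite -catA.
Qed.

Lemma rps_Rr_cons_top a w : last 0 (head [::] (rps_Rr (a :: w))) = a.
Proof.
by have [d ->] := foldl_rps_rinsert_first_column [:: a] [::] w; rewrite last_cat.
Qed.

Lemma rps_Rr_nonincreasing w : w != [::] -> sorted geq w -> rps_Rr w = [:: rev w].
Proof.
case: w => // a w _.
suff column c : path geq (head 0 c) w -> foldl rps_rinsert [:: c] w = [:: catrev w c].
  exact: column [:: a].
elim: w c => [|b w IH] c //= /andP [le_bc path_w].
by rewrite le_bc; apply: IH.
Qed.

(* [0 < a] is needed because an empty column has bottom entry [head 0 [::] = 0]. *)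
Lemma rps_rinsert_shift B a : 0 < a ->
  rps_rinsert (map (map succn) B) a.+1 = map (map succn) (rps_rinsert B a).
Proof.
move=> a_gt0; elim: B => [|[|h c] B IH] //=; first by rewrite leqNgt a_gt0 IH.
by rewrite ltnS; case: ifP => _ //=; rewrite IH.
Qed.

Lemma foldl_rps_rinsert_shift B w : all (fun a => 0 < a) w ->
  foldl rps_rinsert (map (map succn) B) (map succn w)
  = map (map succn) (foldl rps_rinsert B w).
Proof.
elim: w B => [|a w IH] B //= /andP [a_gt0 w_gt0].
by rewrite rps_rinsert_shift // IH.
Qed.

Lemma foldl_rps_rinsert_bottom1 c B w : head 0 c = 1 -> all (fun a => 0 < a) w ->
  exists c', foldl rps_rinsert (c :: B) w = c' :: foldl rps_rinsert B [seq a <- w | 1 < a].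
Proof.
elim: w c B => [|a w IH] c B /=; first by exists c.
move=> bottom_c /andP [a_gt0 w_gt0]; rewrite bottom_c.
case: (ltnP 1 a) => [a_gt1 | a_le1]; first exact: IH.
by apply: IH => //; apply/eqP; rewrite eqn_leq a_le1.
Qed.

Definition column_subst n (sigma : nat -> seq nat) : Prop :=
  forall x, word_over n (sigma x) /\ sorted geq (sigma x).

Definition column_separable n (u v : seq nat) : Prop :=
  exists2 sigma, column_subst n sigma
               & rps_Rr (subst_word sigma u) <> rps_Rr (subst_word sigma v).

Definition lift_subst (sigma : nat -> seq nat) (x y : nat) : seq nat :=
  map succn (sigma y) ++ nseq (y == x) 1.

Lemma word_over_gt0 n w : word_over n w -> all (fun a => 0 < a) w.
Proof. by apply: sub_all => a /andP []. Qed.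

Lemma column_separable_widen m n u v :
  m <= n -> column_separable m u v -> column_separable n u v.
Proof.
move=> le_mn [sigma col_sigma neq_uv]; exists sigma => // x.
have [over_x sorted_x] := col_sigma x; split=> //.
by apply: sub_all over_x => a /andP [-> le_am]; apply: leq_trans le_am le_mn.
Qed.

Lemma sorted_lift_subst sigma x y :
  sorted geq (sigma y) -> sorted geq (lift_subst sigma x y).
Proof.
move=> sorted_y.
have geq_trans : transitive geq by move=> b a c /= le_ba le_cb; apply: leq_trans le_cb le_ba.
rewrite /lift_subst sorted_pairwise // pairwise_cat pairwise_map -sorted_pairwise //.
rewrite sorted_y /=; apply/andP; split; last by case: (y == x).
by apply/allrelP => _ c /mapP [a _ ->] /nseqP [-> _].
Qed.

Lemma column_subst_lift n sigma x :
  column_subst n sigma -> column_subst n.+1 (lift_subst sigma x).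
Proof.
move=> col_sigma y; have [over_y sorted_y] := col_sigma y.
split; last exact: sorted_lift_subst.
rewrite /word_over all_cat all_map; apply/andP; split; last by case: (y == x).
by apply: sub_all over_y => a /andP [_ le_an].
Qed.

Lemma lift_subst_gt0 sigma x y : all (fun a => 0 < a) (lift_subst sigma x y).
Proof. by rewrite all_cat all_map; apply/andP; split; [apply/allP | case: (y == x)]. Qed.

Lemma subst_word_gt0 sigma w :
  (forall y, all (fun a => 0 < a) (sigma y)) -> all (fun a => 0 < a) (subst_word sigma w).
Proof. by move=> sigma_gt0; elim: w => //= y w IH; rewrite all_cat IH sigma_gt0. Qed.

Lemma filter_gt1_subst_lift sigma x w : (forall y, all (fun a => 0 < a) (sigma y)) ->
  [seq a <- subst_word (lift_subst sigma x) w | 1 < a] = map succn (subst_word sigma w).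
Proof.
move=> sigma_gt0; elim: w => //= y w IH.
rewrite !filter_cat IH map_cat filter_map; congr (_ ++ _).
have -> : [seq a <- nseq (y == x) 1 | 1 < a] = [::] by case: (y == x).
by rewrite cats0; congr map; apply/all_filterP.
Qed.

Lemma rps_Rr_subst_lift sigma x w :
  (forall y, all (fun a => 0 < a) (sigma y)) -> sorted geq (sigma x) ->
  exists c, rps_Rr (subst_word (lift_subst sigma x) (x :: w))
            = c :: map (map succn) (rps_Rr (subst_word sigma w)).
Proof.
move=> sigma_gt0 sorted_x.
have lift_x : lift_subst sigma x x = rcons (map succn (sigma x)) 1.
  by rewrite /lift_subst eqxx cats1.
rewrite /rps_Rr /= foldl_cat -/(rps_Rr _) rps_Rr_nonincreasing; first last.
- exact: sorted_lift_subst.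
- by rewrite lift_x -size_eq0 size_rcons.
rewrite lift_x rev_rcons.
have [c ->] := foldl_rps_rinsert_bottom1 (c := 1 :: rev (map succn (sigma x))) [::] erefl
  (subst_word_gt0 w (lift_subst_gt0 sigma x)).
by exists c; rewrite filter_gt1_subst_lift // (foldl_rps_rinsert_shift [::]) ?subst_word_gt0.
Qed.

Lemma column_separable_cons n x u v :
  column_separable n u v -> column_separable n.+1 (x :: u) (x :: v).
Proof.
move=> [sigma col_sigma neq_uv]; exists (lift_subst sigma x); first exact: column_subst_lift.
have sigma_gt0 y : all (fun a => 0 < a) (sigma y) by apply: word_over_gt0 (col_sigma y).1.
have [_ sorted_x] := col_sigma x.
have [cu ->] := rps_Rr_subst_lift u sigma_gt0 sorted_x.
have [cv ->] := rps_Rr_subst_lift v sigma_gt0 sorted_x.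
by move=> [_ /(inj_map (inj_map succn_inj))].
Qed.

Lemma column_separable_head x y u v : x != y -> column_separable 2 (x :: u) (y :: v).
Proof.
move=> neq_xy.
exists (fun z => if z == x then [:: 2] else if z == y then [:: 1] else [::]).
  by move=> z; case: (z == x); case: (z == y).
rewrite /subst_word /= eqxx eq_sym (negbTE neq_xy) eqxx.
by move/(congr1 (fun B => last 0 (head [::] B))); rewrite !rps_Rr_cons_top.
Qed.

Lemma column_separable_single x y : x != y -> column_separable 1 [:: x] [:: y].
Proof.
move=> neq_xy; exists (fun z => nseq (z == x) 1); first by move=> z; case: (z == x).
by rewrite /subst_word /= eqxx eq_sym (negbTE neq_xy).
Qed.

Lemma column_separable_same_size u v :
  size v = size u -> u != v -> column_separable (size u) u v.
Proof.
elim: u v => [|x u IH] [|y v] //= [eq_size] neq.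
case: (eqVneq x y) neq => [<- | neq_xy] neq.
  by apply: column_separable_cons; apply: IH => //; apply: contra neq => /eqP ->.
case: u {IH neq} eq_size => [|z u] eq_size.
  by case: v eq_size => // _; apply: column_separable_single.
exact: column_separable_widen (column_separable_head _ _ neq_xy).
Qed.

Theorem proposition4p8 (n : nat) (u v : seq nat) :
  0 < n -> u != v -> size u <= n -> ~ rps_satisfies n u v.
Proof.
move=> n_gt0 neq_uv le_un sat.
have [eq_size|neq_size] := eqVneq (size v) (size u).
  have [sigma col_sigma] :=
    column_separable_widen le_un (column_separable_same_size eq_size neq_uv).
  by apply; apply: sat => x; have [] := col_sigma x.
have letter1 : word_over n [:: 1] by rewrite /word_over /= n_gt0.
have size_ones w : size (subst_word (fun=> [:: 1]) w) = size w by elim: w => //= _ w ->.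
move/(congr1 (fun B => sumn (shape B))): (sat _ (fun=> letter1)).
by rewrite !size_rps_Rr !size_ones => /eqP; rewrite eq_sym (negbTE neq_size).
Qed.
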